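(* Let $(w_{n,k})_{n,k\ge0}$ be an array of complex numbers such that, for some constants $L,M$: $w_{n,k}=0$ for $k>n$; $\lim_{n\to\infty}w_{n,k}=1$ for every $k$; $|w_{n,k}|\le M$ for all $n,k$; and $|w_{n,k}-w_{n,k+1}|\le L/n$ for all $n\ge1,k\ge0$. Let $f(z)=\sum_{k\ge0}a_kz^k$ be holomorphic on $\mathbb D$ and $p_n(z):=\sum_{k=0}^n w_{n,k}a_kz^k$. Let $\zeta\in\overline{\mathbb D}$ with $\mathcal D_\zeta(f)<\infty$. Then $\lim_{n\to\infty}\mathcal D_\zeta(f-p_n)=0$ and $\sup_{n\ge1}\mathcal D_\zeta(f-p_n)\le C^2\mathcal D_\zeta(f)$, where $C$ is a constant depending only on the array $(w_{n,k})$ (not on $f$ or $\zeta$).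
   Context: $\mathbb D$ is the open unit disk, $\mathrm{Hol}(\mathbb D)$ the holomorphic functions on $\mathbb D$, and $H^2$ the Hardy space with $\|\sum b_kz^k\|_{H^2}^2=\sum|b_k|^2$. For $\zeta\in\overline{\mathbb D}$, $\mathcal D_\zeta$ is the set of $f\in\mathrm{Hol}(\mathbb D)$ of the form $f(z)=a+(z-\zeta)g(z)$ with $g\in H^2$, $a\in\mathbb C$; for such $f$ set $\mathcal D_\zeta(f):=\|g\|_{H^2}^2$, and set $\mathcal D_\zeta(f):=\infty$ if $f\notin\mathcal D_\zeta$. *)

From mathcomp Require Import all_boot all_algebra.
From mathcomp Require Import all_classical all_reals all_analysis.
From mathcomp Require Export complex.
Import GRing.Theory Num.Theory Num.Def.
Import numFieldTopology.Exports numFieldNormedType.Exports.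
Set Implicit Arguments. Unset Strict Implicit. Unset Printing Implicit Defensive.
Local Open Scope ring_scope.
Local Open Scope classical_set_scope.

(* The complex numbers over R, declared as a numClosedFieldType so that the
   analysis library equips it with its normed/topological structure. *)
Definition Cx (R : realType) : numClosedFieldType := R[i].

Definition modc (R : realType) (z : Cx R) : R :=
  Num.sqrt (complex.Re (z : R[i]) ^+ 2 + complex.Im (z : R[i]) ^+ 2).

Definition psum (R : realType) (b : nat -> Cx R) (z : Cx R) (n : nat) : Cx R :=
  \sum_(k < n) b k * z ^+ k.

Definition pser (R : realType) (a : nat -> Cx R) (z : Cx R) : Cx R :=
  limn (psum a z).

Definition H2norm2 (R : realType) (b : nat -> Cx R) : \bar R :=
  (\sum_(0 <= k <oo) ((modc (b k)) ^+ 2)%:E)%E.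

Definition Drep (R : realType) (zeta : Cx R) (h : Cx R -> Cx R) (b : nat -> Cx R) : Prop :=
  (H2norm2 b < +oo)%E /\
  exists c : Cx R, forall z : Cx R, modc z < 1 ->
    exists s : Cx R, psum b z n @[n --> \oo] --> s /\ h z = c + (z - zeta) * s.

(* D_zeta(h) := ||g||_{H^2}^2 if h = c + (z - zeta) g with g in H^2, and +oo
   otherwise (infimum over representations; the representation is unique). *)
Definition Dzeta (R : realType) (zeta : Cx R) (h : Cx R -> Cx R) : \bar R :=
  ereal_inf [set H2norm2 b | b in [set b | Drep zeta h b]].

Definition pn (R : realType) (w : nat -> nat -> Cx R) (a : nat -> Cx R) (n : nat)
  (z : Cx R) : Cx R :=
  \sum_(k < n.+1) w n k * a k * z ^+ k.

From mathcomp Require Import all_boot all_algebra.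
From mathcomp Require Import all_classical all_reals all_analysis.
From mathcomp Require Import complex ring lra.
Import order.Order.TTheory GRing.Theory Num.Theory Num.Def.
Import numFieldTopology.Exports numFieldNormedType.Exports.
Local Open Scope ring_scope.
Local Open Scope classical_set_scope.

(* Write f = c + (z - ζ) g with g = Σ b_k z^k in H^2.  Comparing Taylor
   coefficients (identity theorem for power series) gives
   a_(k+1) = b_k - ζ b_(k+1).  Summation by parts then shows
   p_n = c_n + (z - ζ) Σ_(k <= n) Q_k z^k, where Q_k = w_(n,k+1) b_k + r_k and
   r_k = Σ_(j < n-k) (w_(n,k+j+2) - w_(n,k+j+1)) b_(k+j+1) ζ^(j+1).  Hence
   f - p_n = c' + (z - ζ) Σ (b_k - Q_k) z^k and D_ζ(f - p_n) <= Σ_k U_(n,k) with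
   U_(n,k) = 2 |1 - w_(n,k+1)|^2 |b_k|^2 + 2 (L^2/n) k |b_k|^2 [k <= n],
   the second term coming from Cauchy–Schwarz applied to the r_k.  Each
   U_(n,k) is at most K |b_k|^2, K = 2 (1 + M)^2 + 2 L^2, and tends to 0 as
   n -> oo, so dominated convergence for series gives D_ζ(f - p_n) -> 0, while
   taking the infimum over representations of f gives
   sup_n D_ζ(f - p_n) <= K D_ζ(f); the theorem holds with C = √K. *)

(* A geometric sum of ratio at most 1/2 is bounded by 2 (in a sharp form
   suitable for induction). *)
Lemma geom_sum_le {R : realFieldType} (x : R) N : 0 <= x -> x <= 2^-1 ->
  \sum_(j < N) x ^+ j <= 2 - 2 * x ^+ N.
Proof.
move=> x0 x2; elim: N => [|N IH]; first by rewrite big_ord0 expr0 mulr1 subrr.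
rewrite big_ord_recr /= exprSr.
have y0 : 0 <= x ^+ N := exprn_ge0 N x0.
set y := x ^+ N in IH y0 *; set S := \sum_(i < N) _ in IH *; nra.
Qed.

Lemma le0_of_le_linear {R : realFieldType} (x K d : R) : 0 <= K -> 0 < d ->
  (forall t, 0 < t -> t <= d -> x <= K * t) -> x <= 0.
Proof.
move=> K0 d0 hx; apply/ler_addgt0Pr => e e0; rewrite add0r.
have K1 : 0 < K + 1 by lra.
set t := Num.min d (e / (K + 1)).
have t0 : 0 < t by rewrite lt_min d0 divr_gt0.
have td : t <= d by rewrite ge_min lexx.
have te : t * (K + 1) <= e by rewrite -ler_pdivlMr // ge_min lexx orbT.
have := hx t t0 td; nra.
Qed.

Lemma sqr_sum_le {R : realFieldType} (x : nat -> R) K :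
  (\sum_(j < K) x j) ^+ 2 <= K%:R * \sum_(j < K) x j ^+ 2.
Proof.
elim: K => [|K IH]; first by rewrite !big_ord0 expr0n mul0r.
have Q0 : 0 <= \sum_(j < K) x j ^+ 2 by apply: sumr_ge0 => j _; exact: sqr_ge0.
rewrite !big_ord_recr /=.
case: K IH Q0 => [|K] IH Q0; first by rewrite !big_ord0 !add0r mul1r.
set S := \sum_(j < K.+1) x j in IH *; set Q := \sum_(j < K.+1) _ in IH Q0 *.
set y := x K.+1; have k0 : (0 : R) < K.+1%:R by rewrite ltr0n.
set k := K.+1%:R in IH k0 *; rewrite -natr1 -/k.
have h1 : 0 <= k * (k * Q - S ^+ 2) by apply: mulr_ge0; [exact: ltW | rewrite subr_ge0].
have h2 : 0 <= (S - k * y) ^+ 2 := sqr_ge0 _.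
nra.
Qed.

(* Reindexing Σ_(k<N) Σ_(j<N-k) g(k+j+1) by m = k+j+1: the index m is hit
   exactly m times. *)
Lemma sum_triangle {R : realFieldType} (g : nat -> R) N :
  \sum_(k < N) \sum_(j < N - k) g (k + j).+1 = \sum_(m < N.+1) m%:R * g m.
Proof.
elim: N => [|N IH]; first by rewrite big_ord0 big_ord_recl big_ord0 mul0r addr0.
rewrite big_ord_recr /= subSnn big_ord1 addn0.
rewrite (eq_bigr (fun k : 'I_N => \sum_(j < N - k) g (k + j).+1 + g N.+1)); last first.
  move=> k _; have hk : (k <= N)%N := ltnW (ltn_ord k).
  by rewrite (subSn hk) big_ord_recr /= subnKC.
rewrite big_split /= IH sumr_const card_ord [in RHS]big_ord_recr /=.
by rewrite -addrA -mulrSr mulr_natl.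
Qed.

Lemma cvg_invn {R : realType} : (n%:R^-1 : R) @[n --> \oo] --> 0.
Proof. by rewrite -cvg_shiftS; exact: cvg_harmonic. Qed.

Section NonnegativeSeries.
Context {R : realType}.
Local Open Scope ereal_scope.

Lemma eseries_fin (f : nat -> R) N : (forall k, (N <= k)%N -> f k = 0%R) ->
  \sum_(0 <= k <oo) (f k)%:E = (\sum_(k < N) f k)%:E.
Proof.
move=> f0; apply: cvg_lim => //; apply: cvg_near_cst; near=> M.
have hM : (N <= M)%N by near: M; exact: nbhs_infty_ge.
rewrite sumEFin; congr EFin.
rewrite big_mkord (big_ord_widen M f hM) [RHS]big_mkcond /=.
by apply: eq_bigr => i _; case: ifPn => //; rewrite -leqNgt => /f0.
Unshelve. all: by end_near.
Qed.

Lemma cvge0_le (u : nat -> \bar R) : u n @[n --> \oo] --> 0 ->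
  forall e : R, (0 < e)%R -> \forall n \near \oo, u n <= e%:E.
Proof.
move/fine_cvgP => [hfin hf] e e0.
move/cvgrPdist_le : hf => /(_ e e0) H.
near=> n.
have hn : u n \is a fin_num by near: n; exact: hfin.
have hle : (`|0 - fine (u n)| <= e)%R by near: n; exact: H.
move: hle; rewrite sub0r normrN => hle.
by rewrite -(fineK hn) lee_fin (le_trans (ler_norm _)).
Unshelve. all: by end_near.
Qed.

Lemma cvge0_of_le (u : nat -> \bar R) : (forall n, 0 <= u n) ->
  (forall e : R, (0 < e)%R -> \forall n \near \oo, u n <= e%:E) ->
  u n @[n --> \oo] --> 0.
Proof.
move=> u0 H.
have ufin e n : u n <= e%:E -> u n \is a fin_num.
  by move=> hn; rewrite ge0_fin_numE // (le_lt_trans hn) // ltry.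
apply/fine_cvgP; split; first by apply: filterS (H 1%R ltr01) => n; exact: ufin.
apply/cvgrPdist_le => e e0; apply: filterS (H e e0) => n hn.
rewrite sub0r normrN ger0_norm /=; last by rewrite fine_ge0.
by rewrite -lee_fin fineK // (ufin e).
Qed.

Lemma nneseries_dominated_cvg0 (U : nat -> nat -> R) (g : nat -> R) :
  (forall n k, (0 <= U n k)%R) -> (forall n k, (1 <= n)%N -> (U n k <= g k)%R) ->
  \sum_(0 <= k <oo) (g k)%:E < +oo -> (forall k, U n k @[n --> \oo] --> 0%R) ->
  \sum_(0 <= k <oo) (U n k)%:E @[n --> \oo] --> 0.
Proof.
move=> U0 Ug hg hU.
have g0 k : (0 <= g k)%R by apply: le_trans (U0 1%N k) (Ug _ _ _).
apply: cvge0_of_le => [n|e e0]; first by apply: nneseries_ge0 => k _ _; rewrite lee_fin.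
have e20 : (0 < e / 2)%R by rewrite divr_gt0.
have [N0 _ hN0] := cvge0_le _ (nneseries_tail_cvg hg (fun k _ => g0 k : 0 <= (g k)%:E)) _ e20.
have hF : (\sum_(k < N0) U n k)%R @[n --> \oo] --> (\sum_(k < N0) 0)%R.
  by apply: cvg_big => //; exact: add_continuous.
move: hF; rewrite big1 // => /cvgrPdist_le /(_ _ e20) hF.
near=> n.
have n1 : (1 <= n)%N by near: n; exact: nbhs_infty_ge.
have hFn : (`|0 - \sum_(k < N0) U n k| <= e / 2)%R by near: n; exact: hF.
rewrite (nneseries_split 0%N N0) //; last by move=> k _; rewrite lee_fin.
rewrite add0n (_ : e%:E = (e / 2)%:E + (e / 2)%:E); last by rewrite -EFinD -splitr.
apply: leeD.
  rewrite big_mkord sumEFin lee_fin; apply: le_trans (ler_norm _) _.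
  by rewrite -normrN -sub0r.
apply: le_trans (hN0 N0 (leqnn _)).
apply: lee_nneseries => [k _ _|k _]; rewrite lee_fin //; exact: Ug.
Unshelve. all: by end_near.
Qed.

End NonnegativeSeries.

Section ComplexPowerSeries.
Context {R : realType}.
Local Notation C := (Cx R).

Lemma modcE (z : C) : ((modc z)%:C%C : R[i]) = `|z|.
Proof. by rewrite normc_def. Qed.

Lemma modc_ge0 (z : C) : 0 <= modc z.
Proof. exact: sqrtr_ge0. Qed.

Lemma modc_le (z : C) (r : R) : (modc z <= r) = (`|z| <= (r%:C%C : R[i])).
Proof. by rewrite -modcE lecR. Qed.

Lemma modcM (x y : C) : modc (x * y) = modc x * modc y.
Proof. by apply: complexI; rewrite rmorphM /= !modcE normrM. Qed.

Lemma modcX (x : C) n : modc (x ^+ n) = modc x ^+ n.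
Proof. by apply: complexI; rewrite rmorphXn /= !modcE normrX. Qed.

Lemma modcN (x : C) : modc (- x) = modc x.
Proof. by apply: complexI; rewrite !modcE normrN. Qed.

Lemma modcD (x y : C) : modc (x + y) <= modc x + modc y.
Proof. by rewrite -lecR rmorphD /= !modcE ler_normD. Qed.

Lemma modcB (x y : C) : modc (x - y) <= modc x + modc y.
Proof. by rewrite -(modcN y) modcD. Qed.

Lemma modc0 : modc (0 : C) = 0.
Proof. by apply: complexI; rewrite modcE normr0. Qed.

Lemma modc1 : modc (1 : C) = 1.
Proof. by apply: complexI; rewrite modcE normr1. Qed.

Lemma modc_eq0 (x : C) : modc x = 0 -> x = 0.
Proof. by move=> h; apply/eqP; rewrite -normr_eq0 -modcE h. Qed.

Lemma modc_real (t : R) : 0 <= t -> modc (t%:C%C : C) = t.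
Proof. by move=> t0; rewrite /modc /= expr0n /= addr0 sqrtr_sqr ger0_norm. Qed.

Lemma modc_sum I (r : seq I) (P : pred I) (F : I -> C) :
  modc (\sum_(i <- r | P i) F i) <= \sum_(i <- r | P i) modc (F i).
Proof.
elim/big_rec2: _ => [|i y x _ h]; first by rewrite modc0.
by apply: le_trans (modcD _ _) _; rewrite lerD2l.
Qed.

Lemma modcB_sqr (x y : C) : modc (x - y) ^+ 2 <= 2 * modc x ^+ 2 + 2 * modc y ^+ 2.
Proof.
have := modcB x y; have := modc_ge0 (x - y); have := modc_ge0 x; have := modc_ge0 y.
set d := modc (x - y); set u := modc x; set v := modc y => v0 u0 d0 hd.
have : d ^+ 2 <= (u + v) ^+ 2 by rewrite ler_sqr ?nnegrE ?addr_ge0.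
have := sqr_ge0 (u - v); nra.
Qed.

Lemma modc_cvg0 (u : nat -> C) :
  u n @[n --> \oo] --> 0 -> modc (u n) @[n --> \oo] --> 0.
Proof.
move=> hu; apply/cvgrPdist_le => e e0.
have e0' : (0 : C) < e%:C%C by rewrite ltcR.
move/cvgrPdist_le : hu => /(_ _ e0'); apply: filterS => n.
by rewrite !sub0r !normrN -modc_le ger0_norm // modc_ge0.
Qed.

Lemma psumS (c : nat -> C) z N : psum c z N.+1 = psum c z N + c N * z ^+ N.
Proof. by rewrite /psum big_ord_recr. Qed.

Lemma psumD (f g : nat -> C) z N :
  psum (fun k => f k + g k) z N = psum f z N + psum g z N.
Proof. by rewrite /psum -big_split; apply: eq_bigr => i _; rewrite mulrDl. Qed.

Lemma psumB (f g : nat -> C) z N :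
  psum (fun k => f k - g k) z N = psum f z N - psum g z N.
Proof. by rewrite /psum -sumrB; apply: eq_bigr => i _; rewrite mulrBl. Qed.

Lemma coef_bound (c : nat -> C) (z : C) : cvgn (psum c z) ->
  exists B, forall k, modc (c k) * modc z ^+ k <= B.
Proof.
move=> cv; have := cvg_seq_bounded cv; case/ex_bound => [|B hB].
  exact: (@globally_properfilter _ _ 0%N).
have hB' N : modc (psum c z N) <= modc B.
  have h : `|psum c z N| <= B := hB N I.
  have B0 : 0 <= B := le_trans (normr_ge0 _) h.
  by rewrite modc_le modcE (ger0_norm B0).
exists (modc B + modc B) => k; rewrite -modcX -modcM.
have -> : c k * z ^+ k = psum c z k.+1 - psum c z k by rewrite psumS addrC addKr.
by apply: le_trans (modcB _ _) _; rewrite lerD.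
Qed.

Lemma psum_tail_le (c : nat -> C) (B : R) (z : C) m N :
  (forall k, modc (c k) * 2^-1 ^+ k <= B) -> modc z <= 4^-1 ->
  modc (\sum_(j < N) c (m + j)%N * z ^+ (m + j)) <= 2 * B * (2 * modc z) ^+ m.
Proof.
move=> hB hz; set t := modc z in hz *.
have t2 : 0 <= 2 * t by rewrite mulr_ge0 // modc_ge0.
have B0 : 0 <= B by apply: le_trans (hB 0%N); rewrite expr0 mulr1 modc_ge0.
apply: le_trans (modc_sum _ _ _ _) _.
apply: (@le_trans _ _ (\sum_(j < N) B * (2 * t) ^+ (m + j))).
  apply: ler_sum => j _; rewrite modcM modcX.
  have -> : t ^+ (m + j) = 2^-1 ^+ (m + j) * (2 * t) ^+ (m + j).
    by rewrite -exprMn mulrA mulVf ?mul1r // pnatr_eq0.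
  by rewrite mulrA ler_wpM2r // exprn_ge0.
under eq_bigr => j _ do rewrite exprD mulrA.
have -> : 2 * B * (2 * t) ^+ m = B * (2 * t) ^+ m * 2 by ring.
rewrite -mulr_sumr ler_wpM2l ?mulr_ge0 ?exprn_ge0 //.
have := @geom_sum_le _ (2 * t) N t2 ltac:(lra); have := exprn_ge0 N t2; lra.
Qed.

Lemma coef_le_tail (c : nat -> C) (B : R) (z : C) m :
  (forall k, modc (c k) * 2^-1 ^+ k <= B) -> modc z <= 4^-1 ->
  (forall j, (j < m)%N -> c j = 0) -> psum c z n @[n --> \oo] --> 0 ->
  modc (c m) * modc z ^+ m <= 2 * B * (2 * modc z) ^+ m.+1.
Proof.
move=> hB hz c0 hc.
have psum_split N : psum c z (m.+1 + N) =
    c m * z ^+ m + \sum_(j < N) c (m.+1 + j)%N * z ^+ (m.+1 + j).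
  rewrite /psum big_split_ord /= big_ord_recr /= big1 ?add0r // => i _.
  by rewrite c0 ?mul0r.
apply/ler_addgt0Pr => e e0; rewrite addrC.
have e0' : (0 : C) < e%:C%C by rewrite ltcR.
have [N0 _ hN0] := proj1 (cvgrPdist_le _ _) hc _ e0'.
have := hN0 (m.+1 + N0)%N (leq_addl _ _).
rewrite /= sub0r normrN -modc_le -modcX -modcM => hN.
have -> : c m * z ^+ m = psum c z (m.+1 + N0) -
    \sum_(j < N0) c (m.+1 + j)%N * z ^+ (m.+1 + j) by rewrite psum_split addrK.
by apply: le_trans (modcB _ _) _; apply: lerD => //; exact: psum_tail_le.
Qed.

Lemma pser_uniq (c : nat -> C) :
  (forall z : C, modc z < 1 -> psum c z n @[n --> \oo] --> 0) -> forall k, c k = 0.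
Proof.
move=> hc.
have [B hB] : exists B, forall k, modc (c k) * 2^-1 ^+ k <= B.
  have h2 : modc (2^-1%:C%C : C) = 2^-1 by rewrite modc_real // invr_ge0.
  have [|B hB] := @coef_bound c (2^-1)%:C%C (cvgP _ (hc _ _)).
    by rewrite h2; lra.
  by exists B => k; rewrite -h2.
have B0 : 0 <= B by apply: le_trans (hB 0%N); rewrite expr0 mulr1 modc_ge0.
elim/ltn_ind => m IH; apply: modc_eq0; apply/eqP; rewrite eq_le modc_ge0 andbT.
apply: (@le0_of_le_linear _ _ (B * 2 ^+ m.+2) 4^-1) => [||t t0 t4].
- by rewrite mulr_ge0 // exprn_ge0.
- by [].
have mz : modc (t%:C%C : C) = t by rewrite modc_real // ltW.
have tz : modc (t%:C%C : C) <= 4^-1 by rewrite mz.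
have tz1 : modc (t%:C%C : C) < 1 by rewrite mz; lra.
have := @coef_le_tail c B _ m hB tz IH (hc _ tz1); rewrite mz => h.
rewrite -(ler_pM2r (exprn_gt0 m t0)); apply: le_trans h _.
have -> : 2 * B * (2 * t) ^+ m.+1 = B * 2 ^+ m.+2 * t * t ^+ m.
  by rewrite !exprS exprMn; ring.
exact: lexx.
Qed.

(* Coefficients of (z - ζ) Σ_k b_k z^k, namely b_(k-1) - ζ b_k. *)
Definition factor_coef (zeta : C) (b : nat -> C) (k : nat) : C :=
  (if k is k'.+1 then b k' else 0) - zeta * b k.

Lemma psum_factor_coef zeta b z N :
  psum (factor_coef zeta b) z N.+1 = z * psum b z N - zeta * psum b z N.+1.
Proof.
elim: N => [|N IH].
  by rewrite /psum !big_ord_recr !big_ord0 /factor_coef /= !expr0; ring.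
rewrite psumS IH !psumS /factor_coef exprS.
set P := psum b z N; set x := z ^+ N; ring.
Qed.

Lemma coef_factor (a b : nat -> C) (zeta c : C) :
  (forall z : C, modc z < 1 -> cvgn (psum a z)) ->
  (forall z : C, modc z < 1 -> exists s, psum b z n @[n --> \oo] --> s /\
      pser a z = c + (z - zeta) * s) ->
  forall k, a k.+1 = factor_coef zeta b k.+1.
Proof.
move=> ha hb.
pose e k := factor_coef zeta b k + (if k is 0 then c else 0).
suff He z : modc z < 1 -> psum (fun k => a k - e k) z n @[n --> \oo] --> 0.
  by move=> k; have /eqP := pser_uniq _ He k.+1; rewrite subr_eq0 /e addr0 => /eqP.
move=> zl; have [s [hs hf]] := hb z zl.
have psum_e N : psum e z N.+1 = c + (z * psum b z N - zeta * psum b z N.+1).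
  rewrite /e psumD psum_factor_coef addrC; congr (_ + _).
  by rewrite /psum big_ord_recl big1 => [|i _]; rewrite ?mul0r //= expr0 mulr1 addr0.
have hs1 : psum b z n.+1 @[n --> \oo] --> s by rewrite (cvg_shiftS (psum b z)).
have ee : psum e z n @[n --> \oo] --> pser a z.
  rewrite -(cvg_shiftS (psum e z)) /= (funext psum_e) hf mulrBl.
  exact: cvgD (cvg_cst c) (cvgB (cvgM (cvg_cst z) hs) (cvgM (cvg_cst zeta) hs1)).
rewrite (funext (psumB a e z)) -(subrr (pser a z)).
exact: cvgB (ha z zl) ee.
Qed.

Section SummationByParts.
Variables (zeta : C) (b w : nat -> C) (n : nat).
Hypothesis w_supp : forall k, (n < k)%N -> w k = 0.

Definition wgap m := (w m.+1 - w m) * b m.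

Definition corr k := \sum_(j < n - k) wgap (k + j).+1 * zeta ^+ j.+1.

(* The coefficients Q_k = w_(k+1) b_k + r_k of p_n = c_n + (z - ζ) Σ Q_k z^k. *)
Definition qcoef k := w k.+1 * b k + corr k.

Lemma qcoef_eq0 k : (n <= k)%N -> qcoef k = 0.
Proof.
move=> nk; rewrite /qcoef /corr w_supp ?ltnS // mul0r add0r.
by rewrite (_ : (n - k)%N = 0%N) ?big_ord0 //; apply/eqP; rewrite subn_eq0.
Qed.

Lemma corr_rec k : corr k - zeta * corr k.+1 = wgap k.+1 * zeta.
Proof.
rewrite /corr; case: (ltnP k n) => kn.
  rewrite -(subnSK kn) big_ord_recl /= addn0 expr1 mulr_sumr.
  rewrite [X in _ + X - _](eq_bigr (fun i : 'I_(n - k.+1) =>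
     zeta * (wgap (k.+1 + i).+1 * zeta ^+ i.+1))); first by rewrite addrK.
  by move=> i _; rewrite /bump leq0n add1n addnS addSn exprS mulrCA.
have e1 : (n - k = 0)%N by apply/eqP; rewrite subn_eq0.
have e2 : (n - k.+1 = 0)%N by apply/eqP; rewrite subn_eq0 (leq_trans kn).
rewrite e1 e2 !big_ord0 mulr0 subrr /wgap !w_supp ?mul0r ?subrr ?mul0r //.
by rewrite ltnS ltnW.
Qed.

Lemma factor_qcoef k : factor_coef zeta qcoef k.+1 = w k.+1 * factor_coef zeta b k.+1.
Proof.
have /eqP := corr_rec k; rewrite subr_eq => /eqP hr.
by rewrite /factor_coef /qcoef hr /wgap; set r := corr k.+1; ring.
Qed.

Lemma pn_factor (a : nat -> C) z : (forall k, a k.+1 = factor_coef zeta b k.+1) ->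
  \sum_(k < n.+1) w k * a k * z ^+ k =
  w 0 * a 0 + zeta * qcoef 0 + (z - zeta) * psum qcoef z n.+1.
Proof.
move=> ha.
have e1 : psum (factor_coef zeta qcoef) z n.+1 = (z - zeta) * psum qcoef z n.+1.
  by rewrite psum_factor_coef psumS (@qcoef_eq0 n (leqnn n)) mul0r addr0; ring.
have e2 : psum (factor_coef zeta qcoef) z n.+1 =
    - zeta * qcoef 0 + \sum_(k < n) w k.+1 * a k.+1 * z ^+ k.+1.
  rewrite /psum big_ord_recl /= expr0 mulr1.
  have -> : factor_coef zeta qcoef 0 = - zeta * qcoef 0 by rewrite /factor_coef sub0r mulNr.
  by congr (_ + _); apply: eq_bigr => i _; rewrite /bump leq0n add1n factor_qcoef ha.
rewrite -e1 e2 big_ord_recl /= expr0 mulr1.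
rewrite [X in _ + X = _](eq_bigr (fun i : 'I_n => w i.+1 * a i.+1 * z ^+ i.+1)).
  by rewrite mulNr addrA addrK.
by move=> i _; rewrite /bump leq0n add1n.
Qed.

Lemma psum_qcoef_stable z j : psum qcoef z (n.+1 + j) = psum qcoef z n.+1.
Proof.
elim: j => [|j IH]; first by rewrite addn0.
by rewrite addnS psumS IH qcoef_eq0 ?mul0r ?addr0 // leqW // leq_addr.
Qed.

Lemma cvg_psum_sub_qcoef z s : psum b z N @[N --> \oo] --> s ->
  psum (fun k => b k - qcoef k) z N @[N --> \oo] --> s - psum qcoef z n.+1.
Proof.
move=> hs; rewrite (funext (psumB b qcoef z)); apply: cvgB hs _.
apply: cvg_near_cst; near=> N.
have hN : (n.+1 <= N)%N by near: N; exact: nbhs_infty_ge.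
by rewrite -(subnKC hN) psum_qcoef_stable.
Unshelve. all: by end_near.
Qed.

Section CorrectionEstimate.
Variable L : R.
Hypothesis n_ge1 : (1 <= n)%N.
Hypothesis w_lip : forall k, modc (w k - w k.+1) <= L / n%:R.
Hypothesis zeta_le1 : modc zeta <= 1.

Lemma corr_le k : modc (corr k) <= L / n%:R * \sum_(j < n - k) modc (b (k + j).+1).
Proof.
apply: le_trans (modc_sum _ _ _ _) _; rewrite mulr_sumr; apply: ler_sum => j _.
rewrite /wgap !modcM modcX -modcN opprB -mulrA.
apply: ler_pM; rewrite ?mulr_ge0 ?modc_ge0 ?exprn_ge0 ?modc_ge0 //.
by apply: ler_piMr; rewrite ?modc_ge0 // exprn_ile1 ?modc_ge0.
Qed.

Lemma corr_sqr_le k : modc (corr k) ^+ 2 <=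
  L ^+ 2 / n%:R * \sum_(j < n - k) modc (b (k + j).+1) ^+ 2.
Proof.
have n0 : (0 : R) < n%:R by rewrite ltr0n.
have nk : ((n - k)%N%:R : R) <= n%:R by rewrite ler_nat leq_subr.
have cs := sqr_sum_le (fun j => modc (b (k + j).+1)) (n - k).
have Q0 : 0 <= \sum_(j < n - k) modc (b (k + j).+1) ^+ 2.
  by apply: sumr_ge0 => j _; exact: sqr_ge0.
apply: le_trans (_ : (L / n%:R) ^+ 2 * (\sum_(j < n - k) modc (b (k + j).+1)) ^+ 2 <= _).
  by rewrite -exprMn ler_sqr ?nnegrE ?modc_ge0 ?(le_trans (modc_ge0 _) (corr_le k)) ?corr_le.
have -> : L ^+ 2 / n%:R = (L / n%:R) ^+ 2 * n%:R by field; rewrite gt_eqF.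
rewrite -mulrA ler_wpM2l ?sqr_ge0 //; apply: le_trans cs _.
by rewrite ler_wpM2r.
Qed.

Lemma sum_corr_sqr_le : \sum_(k < n) modc (corr k) ^+ 2 <=
  L ^+ 2 / n%:R * \sum_(m < n.+1) m%:R * modc (b m) ^+ 2.
Proof.
rewrite -(sum_triangle (fun m => modc (b m) ^+ 2)) mulr_sumr.
by apply: ler_sum => k _; exact: corr_sqr_le.
Qed.

End CorrectionEstimate.
End SummationByParts.
End ComplexPowerSeries.

Section DirichletIntegral.
Context {R : realType}.
Local Notation C := (Cx R).
Local Open Scope ereal_scope.

Lemma H2norm2_ge0 (b : nat -> C) : 0 <= H2norm2 b.
Proof. by apply: nneseries_ge0 => k _ _; rewrite lee_fin sqr_ge0. Qed.

Lemma Dzeta_ge0 (zeta : C) (h : C -> C) : 0 <= Dzeta zeta h.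
Proof. by apply: le_ereal_inf_tmp => _ [b _ <-]; exact: H2norm2_ge0. Qed.

Lemma Dzeta_le_H2norm2 (zeta : C) (h : C -> C) b :
  Drep zeta h b -> Dzeta zeta h <= H2norm2 b.
Proof. by move=> hb; apply: ereal_inf_lbound; exists b. Qed.

Lemma Drep_of_Dzeta_fin (zeta : C) (h : C -> C) :
  Dzeta zeta h < +oo -> exists b, Drep zeta h b.
Proof.
move=> hD; apply: contrapT => hnb; move: hD; rewrite /Dzeta.
have -> : [set H2norm2 b | b in [set b | Drep zeta h b]] = set0.
  by apply/seteqP; split => x //= [b hb _]; apply: hnb; exists b.
by rewrite ereal_inf0.
Qed.

End DirichletIntegral.

Section Approximation.
Context {R : realType}.
Local Notation C := (Cx R).
Variables (w : nat -> nat -> C) (L M : R).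
Hypothesis w_supp : forall n k : nat, (n < k)%N -> w n k = 0.
Hypothesis w_lim : forall k : nat, w n k @[n --> \oo] --> (1 : C).
Hypothesis w_bnd : forall n k : nat, modc (w n k) <= M.
Hypothesis w_lip : forall n k : nat, (1 <= n)%N -> modc (w n k - w n k.+1) <= L / n%:R.

(* U_(n,k) = err_weight + err_lip, the bound for |b_k - Q_k|^2 announced in
   the opening comment: the first part measures how far w_(n,k+1) is from 1,
   the second comes from the Lipschitz condition on the weights. *)
Definition err_weight (b : nat -> C) n k : R :=
  2 * (modc (1 - w n k.+1) ^+ 2 * modc (b k) ^+ 2).

Definition err_lip (b : nat -> C) n k : R :=
  if (k <= n)%N then 2 * (L ^+ 2 / n%:R * (k%:R * modc (b k) ^+ 2)) else 0.

Definition err_term (b : nat -> C) n k : R := err_weight b n k + err_lip b n k.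

(* K = 2 (1 + M)^2 + 2 L^2, the square of the constant of the theorem. *)
Definition approx_const := 2 * (1 + M) ^+ 2 + 2 * L ^+ 2.

Lemma M_ge0 : 0 <= M.
Proof. exact: le_trans (modc_ge0 _) (w_bnd 0 0). Qed.

Lemma approx_const_gt0 : 0 < approx_const.
Proof.
have hM := M_ge0; have hL := sqr_ge0 L.
have : 1 <= (1 + M) ^+ 2 by rewrite expr2; nra.
rewrite /approx_const; lra.
Qed.

Lemma err_weight_ge0 b n k : 0 <= err_weight b n k.
Proof. by apply: mulr_ge0 => //; apply: mulr_ge0; exact: sqr_ge0. Qed.

Lemma err_lip_ge0 b n k : 0 <= err_lip b n k.
Proof.
have hb := sqr_ge0 (modc (b k)); have hk : 0 <= (k%:R : R) := ler0n _ _.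
have hL : 0 <= L ^+ 2 / n%:R by rewrite mulr_ge0 ?sqr_ge0 ?invr_ge0.
by rewrite /err_lip; case: (k <= n)%N => //; do 3![apply: mulr_ge0 => //].
Qed.

Lemma err_term_ge0 b n k : 0 <= err_term b n k.
Proof. exact: addr_ge0 (err_weight_ge0 _ _ _) (err_lip_ge0 _ _ _). Qed.

Lemma err_weight_le b n k : err_weight b n k <= 2 * (1 + M) ^+ 2 * modc (b k) ^+ 2.
Proof.
have h1 : modc (1 - w n k.+1) ^+ 2 <= (1 + M) ^+ 2.
  rewrite ler_sqr ?nnegrE ?modc_ge0 ?addr_ge0 ?M_ge0 //.
  by apply: le_trans (modcB _ _) _; rewrite modc1 lerD2l.
by rewrite /err_weight -mulrA ler_wpM2l // ler_wpM2r ?sqr_ge0.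
Qed.

Lemma err_lip_le b n k : (1 <= n)%N -> err_lip b n k <= 2 * L ^+ 2 * modc (b k) ^+ 2.
Proof.
move=> n1; have LB : 0 <= 2 * L ^+ 2 * modc (b k) ^+ 2.
  by apply: mulr_ge0; [apply: mulr_ge0 | ]; rewrite ?sqr_ge0.
rewrite /err_lip; case: (leqP k n) => kn /=; last exact: LB.
have n0 : (0 : R) < n%:R by rewrite ltr0n.
have kn1 : (k%:R / n%:R : R) <= 1 by rewrite ler_pdivrMr // mul1r ler_nat.
rewrite (_ : 2 * _ = 2 * L ^+ 2 * modc (b k) ^+ 2 * (k%:R / n%:R)); last by ring.
exact: ler_piMr.
Qed.

Lemma err_term_le b n k : (1 <= n)%N -> err_term b n k <= approx_const * modc (b k) ^+ 2.
Proof.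
move=> n1; rewrite /approx_const mulrDl.
exact: lerD (err_weight_le b n k) (err_lip_le b n k n1).
Qed.

Lemma err_term_cvg0 b k : err_term b n k @[n --> \oo] --> 0.
Proof.
set B := modc (b k) ^+ 2.
have h1 : modc (1 - w n k.+1) @[n --> \oo] --> 0.
  by apply: modc_cvg0; rewrite -(subrr (1 : C)); exact: cvgB (cvg_cst _) (w_lim k.+1).
have hA : err_weight b n k @[n --> \oo] --> 2 * (0 * 0 * B).
  rewrite /err_weight; under eq_fun do rewrite expr2.
  exact: cvgMl_tmp (cvgMr_tmp (cvgM h1 h1)).
have hG : 2 * (L ^+ 2 / n%:R * (k%:R * B)) @[n --> \oo] --> 2 * (L ^+ 2 * 0 * (k%:R * B)).
  exact: cvgMl_tmp (cvgMr_tmp (cvgMl_tmp cvg_invn)).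
have hG' : err_lip b n k @[n --> \oo] --> 2 * (L ^+ 2 * 0 * (k%:R * B)).
  apply: cvg_trans hG; apply: near_eq_cvg; near=> n.
  by rewrite /err_lip ifT //; near: n; exact: nbhs_infty_ge.
have := cvgD hA hG'; rewrite !(mulr0, mul0r) addr0; exact.
Unshelve. all: by end_near.
Qed.

Section FixedRepresentation.
Variables (zeta : C) (b : nat -> C) (n : nat).
Hypothesis n_ge1 : (1 <= n)%N.
Hypothesis zeta_le1 : modc zeta <= 1.

Local Notation Q := (qcoef zeta b (w n) n).

Lemma coef_diff_sqr_le k :
  modc (b k - Q k) ^+ 2 <= err_weight b n k + 2 * modc (corr zeta b (w n) n k) ^+ 2.
Proof.
have -> : b k - Q k = (1 - w n k.+1) * b k - corr zeta b (w n) n k.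
  by rewrite /qcoef; set r := corr _ _ _ _ k; ring.
by apply: le_trans (modcB_sqr _ _) _; rewrite modcM exprMn.
Qed.

Lemma H2_diff_le :
  (H2norm2 (fun k => b k - Q k)%R <= \sum_(0 <= k <oo) (err_term b n k)%:E)%E.
Proof.
pose rho k := 2 * modc (corr zeta b (w n) n k) ^+ 2.
have A0 k : (0 <= (err_weight b n k)%:E)%E by rewrite lee_fin err_weight_ge0.
have G0 k : (0 <= (err_lip b n k)%:E)%E by rewrite lee_fin err_lip_ge0.
have rho0 k : (0 <= (rho k)%:E)%E by rewrite lee_fin; apply: mulr_ge0 => //; exact: sqr_ge0.
have rho_le : (\sum_(0 <= k <oo) (rho k)%:E <= \sum_(0 <= k <oo) (err_lip b n k)%:E)%E.
  rewrite (@eseries_fin _ rho n); last first.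
    move=> k nk; rewrite /rho /corr (_ : (n - k)%N = 0%N) ?big_ord0 ?modc0 ?expr0n ?mulr0 //.
    by apply/eqP; rewrite subn_eq0.
  rewrite (@eseries_fin _ (err_lip b n) n.+1); last by move=> k nk; rewrite /err_lip ifN // -ltnNge.
  rewrite lee_fin /rho -mulr_sumr.
  have hr := sum_corr_sqr_le zeta b (w n) n L n_ge1 (fun k => w_lip n k n_ge1) zeta_le1.
  apply: le_trans (ler_wpM2l _ hr) _ => //.
  rewrite !mulr_sumr; apply: ler_sum => i _.
  by rewrite /err_lip (ltnSE (ltn_ord i)) mulrA -mulrA.
apply: (@le_trans _ _ (\sum_(0 <= k <oo) ((err_weight b n k)%:E + (rho k)%:E))%E).
  apply: lee_nneseries => [k _ _|k _]; first by rewrite lee_fin sqr_ge0.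
  by rewrite -EFinD lee_fin coef_diff_sqr_le.
rewrite nneseriesD //; apply: le_trans (leeD2l _ rho_le) _.
by rewrite -nneseriesD //; apply: lee_nneseries => [k _ _|k _]; rewrite ?adde_ge0 ?EFinD.
Qed.

Lemma err_series_le :
  (\sum_(0 <= k <oo) (err_term b n k)%:E <= approx_const%:E * H2norm2 b)%E.
Proof.
apply: (@le_trans _ _ (\sum_(0 <= k <oo) (approx_const%:E * (modc (b k) ^+ 2)%:E))%E).
  apply: lee_nneseries => [k _ _|k _]; first by rewrite lee_fin err_term_ge0.
  by rewrite -EFinM lee_fin err_term_le.
by rewrite nneseriesZl // => k _; rewrite lee_fin sqr_ge0.
Qed.

Variable a : nat -> C.
Hypothesis a_cvg : forall z : C, modc z < 1 -> cvgn (psum a z).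
Hypothesis b_rep : Drep zeta (pser a) b.

Lemma Drep_diff : Drep zeta (fun z => pser a z - pn w a n z) (fun k => b k - Q k).
Proof.
have [b_fin [c b_eq]] := b_rep.
have a_coef := coef_factor _ _ _ _ a_cvg b_eq.
split.
  apply: le_lt_trans H2_diff_le (le_lt_trans err_series_le _).
  by apply: lte_mul_pinfty; rewrite ?lee_fin ?ltW ?approx_const_gt0.
exists (c - (w n 0 * a 0 + zeta * Q 0)) => z zl.
have [s [hs hf]] := b_eq z zl.
exists (s - psum Q z n.+1); split; first exact: cvg_psum_sub_qcoef _ _ _ _ (w_supp n) _ _ hs.
rewrite /pn (pn_factor _ _ _ _ (w_supp n) _ z a_coef) hf.
by set P := psum Q z n.+1; set X := w n 0 * a 0 + zeta * Q 0; ring.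
Qed.

Lemma Dzeta_diff_le :
  (Dzeta zeta (fun z => (pser a z - pn w a n z)%R)
    <= \sum_(0 <= k <oo) (err_term b n k)%:E)%E.
Proof. exact: le_trans (Dzeta_le_H2norm2 _ _ _ Drep_diff) H2_diff_le. Qed.

End FixedRepresentation.

Section Convergence.
Variables (a : nat -> C) (zeta : C).
Hypothesis a_cvg : forall z : C, modc z < 1 -> cvgn (psum a z).
Hypothesis zeta_le1 : modc zeta <= 1.

Local Open Scope ereal_scope.

Lemma Dzeta_diff_cvg0 : Dzeta zeta (pser a) < +oo ->
  Dzeta zeta (fun z => (pser a z - pn w a n z)%R) @[n --> \oo] --> 0.
Proof.
move=> /Drep_of_Dzeta_fin [b b_rep].
have hg : \sum_(0 <= k <oo) (approx_const * modc (b k) ^+ 2)%:E < +oo.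
  under eq_eseriesr do rewrite EFinM.
  rewrite nneseriesZl; last by move=> k _; rewrite lee_fin sqr_ge0.
  by apply: lte_mul_pinfty; rewrite ?lee_fin ?ltW ?approx_const_gt0 //; case: b_rep.
have := nneseries_dominated_cvg0 _ _ (err_term_ge0 b) (err_term_le b) hg (err_term_cvg0 b).
apply: squeeze_cvge (cvg_cst 0); near=> n.
have n1 : (1 <= n)%N by near: n; exact: nbhs_infty_ge.
by rewrite Dzeta_ge0 (Dzeta_diff_le _ _ _ n1 zeta_le1 _ a_cvg b_rep).
Unshelve. all: by end_near.
Qed.

Lemma Dzeta_diff_sup_le :
  ereal_sup [set Dzeta zeta (fun z => (pser a z - pn w a n z)%R) | n in [set n | (1 <= n)%N]]
    <= approx_const%:E * Dzeta zeta (pser a).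
Proof.
apply: ge_ereal_sup => _ [n n1 <-].
rewrite [X in _ <= _ * X]/Dzeta -ereal_inf_pZl ?approx_const_gt0 //.
apply: le_ereal_inf_tmp => _ [_ [b b_rep <-] <-].
exact: le_trans (Dzeta_diff_le _ _ _ n1 zeta_le1 _ a_cvg b_rep) (err_series_le _ _ n1).
Qed.

End Convergence.
End Approximation.

Theorem mainTheorem8 (R : realType) (w : nat -> nat -> Cx R) (L M : R) :
  (forall n k : nat, (n < k)%N -> w n k = 0) ->
  (forall k : nat, w n k @[n --> \oo] --> (1 : Cx R)) ->
  (forall n k : nat, modc (w n k) <= M) ->
  (forall n k : nat, (1 <= n)%N ->
     modc (w n k - w n k.+1) <= L / n%:R) ->
  exists C : R, forall (a : nat -> Cx R) (zeta : Cx R),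
    (forall z : Cx R, modc z < 1 -> cvgn (psum a z)) ->
    modc zeta <= 1 ->
    (Dzeta zeta (pser a) < +oo)%E ->
    (Dzeta zeta (fun z => (pser a z - pn w a n z)%R) @[n --> \oo] --> 0%E)
    /\ (ereal_sup [set Dzeta zeta (fun z => (pser a z - pn w a n z)%R)
                    | n in [set n : nat | (1 <= n)%N]]
        <= (C ^+ 2)%:E * Dzeta zeta (pser a))%E.
Proof.
move=> w_supp w_lim w_bnd w_lip.
exists (Num.sqrt (approx_const L M)) => a zeta a_cvg zeta_le1 f_fin.
rewrite sqr_sqrtr; last exact: ltW (approx_const_gt0 _ L _ w_bnd).
split; first exact: Dzeta_diff_cvg0 w_supp w_lim w_bnd w_lip a zeta a_cvg zeta_le1 f_fin.
exact: Dzeta_diff_sup_le w_supp w_bnd w_lip a zeta a_cvg zeta_le1.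
Qed.
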